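(* Let $\mathbb{F}$ be a field, $d\geq 3$ an integer and $V$ a vector space over $\mathbb{F}$ of dimension $d+1$. Let $E^*_0,\dots,E^*_d$ be a system of mutually orthogonal idempotents in $\mathrm{End}(V)$, and let $A\in\mathrm{End}(V)$ satisfy $E^*_iAE^*_j=0$ if $|i-j|>1$ and $E^*_iAE^*_j\neq 0$ if $|i-j|=1$. Assume $A$ is multiplicity-free and bipartite, with primitive idempotents $E_0,\dots,E_d$ and corresponding eigenvalues $\theta_0,\dots,\theta_d$. Let $\theta^*_0,\dots,\theta^*_d\in\mathbb{F}$ and $A^*=\sum_i\theta^*_iE^*_i$. Assume $E_0$ is normalizing and that in $\Delta$ the vertex $E_0$ is adjacent to $E_1$ and to no other vertex. Then, with $a^*_0=\operatorname{tr}(E_0A^* )$, $$a^*_0=\frac{\theta_1\theta^*_0-\theta_0\theta^*_1}{\theta_1-\theta_0}=\frac{\theta_1\theta^*_d-\theta_0\theta^*_{d-1}}{\theta_1-\theta_0}.$$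
   Context: A system of mutually orthogonal idempotents is a sequence $E^*_0,\dots,E^*_d$ of linear maps $V\to V$ with $E^*_iE^*_j=\delta_{ij}E^*_i$ and $\operatorname{rank}E^*_i=1$. $A$ is multiplicity-free if it has $d+1$ mutually distinct eigenvalues in $\mathbb{F}$; the primitive idempotent $E_i$ for $\theta_i$ is the projection onto the $\theta_i$-eigenspace along the sum of the other eigenspaces. $A$ is bipartite if $\operatorname{tr}(E^*_iA)=0$ for all $i$. $\Delta$ is the graph whose vertices are $E_0,\dots,E_d$, with $E_i\neq E_j$ adjacent iff $E_iA^*E_j\neq 0$. For a basis $v_0,\dots,v_d$, the matrix $Y$ representing $A$ satisfies $Av_j=\sum_iY_{ij}v_i$. An eigenvalue $\theta$ of $A$ is normalizing if there is a basis $v_0,\dots,v_d$ of $V$ with $v_i\in E^*_iV$ such that every row of the matrix representing $A$ sums to $\theta$; $E_i$ is normalizing if $\theta_i$ is. *)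

(* V = F^(d+1) as column vectors 'cV[F]_n; End(V) = 'M[F]_n,
   a matrix M acting as v |-> M *m v, so composition of maps is *m. *)
From HB Require Import structures.
From mathcomp Require Import all_boot all_order all_algebra.
Set Implicit Arguments. Unset Strict Implicit. Unset Printing Implicit Defensive.
Import Order.TTheory GRing.Theory Num.Theory.
Local Open Scope ring_scope.

Section Defs.
Variables (F : fieldType) (n : nat).

Definition mutually_orthogonal_idempotents (Es : 'I_n -> 'M[F]_n) : Prop :=
  (forall i j, Es i *m Es j = if i == j then Es i else 0) /\
  (forall i, \rank (Es i) = 1%N).

Definition is_eigenvalue (A : 'M[F]_n) (t : F) : Prop :=
  exists2 v : 'cV[F]_n, v != 0 & A *m v = t *: v.

Definition multiplicity_free_with (A : 'M[F]_n) (theta : 'I_n -> F) : Prop :=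
  injective theta /\ forall i, is_eigenvalue A (theta i).

(* E is the projection onto the theta_i-eigenspace along the sum of the
   other eigenspaces: for any family of eigenvectors w_j (for theta_j),
   E maps \sum_j w_j to w_i. *)
Definition primitive_idempotent (A : 'M[F]_n) (theta : 'I_n -> F) (i : 'I_n)
  (E : 'M[F]_n) : Prop :=
  forall w : 'I_n -> 'cV[F]_n,
    (forall j, A *m w j = theta j *: w j) -> E *m (\sum_j w j) = w i.

Definition bipartite (Es : 'I_n -> 'M[F]_n) (A : 'M[F]_n) : Prop :=
  forall i, \tr (Es i *m A) = 0.

(* theta is normalizing: there is a basis v_0..v_{n-1} (columns of B) with
   v_i in E^*_i V such that every row of the matrix Y representing A
   (A v_j = \sum_i Y_ij v_i, i.e. A B = B Y) sums to theta. *)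
Definition normalizing (Es : 'I_n -> 'M[F]_n) (A : 'M[F]_n) (t : F) : Prop :=
  exists B : 'M[F]_n,
    [/\ B \in unitmx,
        forall i, exists u : 'cV[F]_n, col i B = Es i *m u &
        exists Y : 'M[F]_n, A *m B = B *m Y /\ forall i, \sum_j Y i j = t].

Definition Delta_adj (E : 'I_n -> 'M[F]_n) (Astar : 'M[F]_n) (i j : 'I_n) : Prop :=
  E i <> E j /\ E i *m Astar *m E j <> 0.

End Defs.

From HB Require Import structures.
From mathcomp Require Import all_boot all_order all_algebra.
From mathcomp Require Import ring zify.
Import Order.TTheory GRing.Theory Num.Theory.
Local Open Scope ring_scope.
Set Implicit Arguments. Unset Strict Implicit. Unset Printing Implicit Defensive.

(* As E_0 has rank one, E_0 A^* E_0 = a0 E_0, and as E_0 is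
   adjacent only to E_1, splitting the identity as the sum of the E_i gives
   E_0 A^* = a0 E_0 + E_0 A^* E_1.  Bipartiteness and the tridiagonal shape give
   A E^*_0 = E^*_1 A E^*_0.  Evaluating E_0 A^* A E^*_0 through E^*_1 and through the
   decomposition of E_0 A^* yields
     θ*_1 θ_0 Z = (a0 θ_0 + θ_1 (θ*_0 - a0)) Z,   Z := E_0 E^*_0,
   and Z <> 0: a matrix X with X A = θ X and X E^*_0 = 0 vanishes, since
   X E^*_i = 0 propagates to X E^*_(i+1) through the nonzero rank-one block
   E^*_(i+1) A E^*_i.  Solving gives the first formula; the second one is the
   first one for the reversed system E^*_d, ..., E^*_0. *)

Section RankOne.
Variable F : fieldType.

Lemma scalerIl (V : lmodType F) (v : V) : v != 0 -> injective (fun a : F => a *: v).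
Proof.
move=> v_neq0 a b /eqP; rewrite -subr_eq0 -scalerBl scaler_eq0 (negbTE v_neq0).
by rewrite orbF subr_eq0 => /eqP.
Qed.

Lemma mul_col_row_eq0 m k (p : 'cV[F]_m) (q : 'rV[F]_k) :
  (p *m q == 0) = (p == 0) || (q == 0).
Proof.
apply/idP/idP => [/eqP pq0 | /orP[] /eqP->]; rewrite ?mul0mx ?mulmx0 //.
have [_ | /eqP q_neq0] := eqVneq q 0; first by rewrite orbT.
have [b qb_neq0] : exists b, q 0 b != 0.
  apply/existsP; apply: contra_notT q_neq0 => /existsPn qb0.
  by apply/rowP => b; rewrite mxE; apply/eqP/negPn/qb0.
rewrite orbF; apply/eqP/colP => a; move/matrixP: pq0 => /(_ a b).
by rewrite !mxE big_ord1 => /eqP; rewrite mulf_eq0 (negbTE qb_neq0) orbF => /eqP.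
Qed.

Lemma mxrank1_factor m k (M : 'M[F]_(m, k)) : \rank M = 1%N ->
  exists (p : 'cV[F]_m) (q : 'rV[F]_k), M = p *m q.
Proof.
move=> rk1; have := mulmx_base M; move: (col_base M) (row_base M).
by rewrite rk1 => p q <-; exists p, q.
Qed.

Lemma mxrank1_sandwich n (P X : 'M[F]_n) :
  \rank P = 1%N -> P *m X *m P = \tr (P *m X) *: P.
Proof.
move=> /mxrank1_factor[p [q ->]].
have -> : p *m q *m X *m (p *m q) = p *m (q *m X *m p) *m q by rewrite !mulmxA.
have -> : \tr (p *m q *m X) = \tr (q *m X *m p) by rewrite -mulmxA mxtrace_mulC.
by rewrite [q *m X *m p]mx11_scalar mul_mx_scalar -scalemxAl mxtrace_scalar.
Qed.

Lemma mxrank1_mulmx_cancel n m k (P : 'M[F]_n) (X : 'M[F]_(m, n)) (Y : 'M[F]_(n, k)) :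
  \rank P = 1%N -> P *m Y != 0 -> X *m P *m Y = 0 -> X *m P = 0.
Proof.
move=> /mxrank1_factor[p [q ->]] pqY_neq0 /eqP.
have qY_neq0 : q *m Y != 0.
  by apply: contraNneq pqY_neq0 => qY0; rewrite -mulmxA qY0 mulmx0.
rewrite !mulmxA -mulmxA mul_col_row_eq0 (negbTE qY_neq0) orbF => /eqP XP0.
by rewrite XP0 mul0mx.
Qed.

End RankOne.

Section Biorthogonal.
Variables (F : fieldType) (n : nat) (P : 'I_n -> 'M[F]_n) (u : 'I_n -> 'cV[F]_n).
Hypotheses (u_neq0 : forall j, u j != 0)
  (P_u : forall i j, P i *m u j = if i == j then u j else 0).

(* The u_j are then a basis of F^n and the P_i the coordinate projections. *)
Let W : 'M[F]_n := \matrix_(a, j) u j a 0.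

Let col_mulmx_W (X : 'M[F]_n) j : col j (X *m W) = X *m u j.
Proof. by rewrite colE -mulmxA -colE; congr (_ *m _); apply/colP => a; rewrite !mxE. Qed.

Let W_free : row_free W.
Proof.
rewrite row_free_unit -unitmx_tr -row_free_unit; apply: inj_row_free => v.
move=> /(congr1 trmx); rewrite trmx_mul trmxK trmx0 => Wv0; apply: trmx_inj.
have Wv : W *m v^T = \sum_j v 0 j *: u j.
  by apply/colP => a; rewrite !mxE summxE; apply: eq_bigr => j _; rewrite !mxE mulrC.
apply/colP => i; rewrite !mxE; apply/eqP.
have := congr1 (mulmx (P i)) Wv; rewrite Wv0 mulmx0 mulmx_sumr (bigD1 i) //=.
rewrite big1 => [|j /negbTE ji]; last by rewrite -scalemxAr P_u eq_sym ji scaler0.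
by rewrite -scalemxAr P_u eqxx addr0 => /esym/eqP; rewrite scaler_eq0 (negbTE (u_neq0 i)) orbF.
Qed.

Lemma biorth_mx_eq (X Y : 'M[F]_n) : (forall j, X *m u j = Y *m u j) -> X = Y.
Proof.
move=> XYu; apply: (row_free_inj W_free); apply/matrixP => a j.
by move: (XYu j); rewrite -!col_mulmx_W => /colP /(_ a); rewrite !mxE.
Qed.

Lemma biorth_sum1 : \sum_i P i = 1%:M.
Proof.
apply: biorth_mx_eq => j; rewrite mulmx_suml mul1mx (bigD1 j) //= P_u eqxx.
by rewrite big1 ?addr0 // => i /negbTE ij; rewrite P_u ij.
Qed.

Lemma biorth_rank1 i : \rank (P i) = 1%N.
Proof.
have PW : P i *m W = u i *m delta_mx 0 i.
  apply/matrixP => a j; have := col_mulmx_W (P i) j; rewrite P_u => /colP /(_ a).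
  rewrite !mxE big_ord1 !mxE eqxx /= => ->; rewrite eq_sym.
  by case: eqP => [->|_]; rewrite ?mxE ?mulr1 ?mulr0.
have Pi_neq0 : P i != 0.
  by apply: contraNneq (u_neq0 i) => Pi0; have := P_u i i; rewrite eqxx Pi0 mul0mx => <-.
apply/eqP; rewrite eqn_leq lt0n mxrank_eq0 Pi_neq0 andbT -(mxrankMfree _ W_free) PW.
exact: leq_trans (mxrankM_maxl _ _) (rank_leq_col _).
Qed.

End Biorthogonal.

Section OrthogonalIdempotents.
Variables (F : fieldType) (n : nat) (Es : 'I_n -> 'M[F]_n).
Hypothesis Es_mo : mutually_orthogonal_idempotents Es.

Lemma orthogonal_idempotents_sum1 : \sum_i Es i = 1%:M.
Proof.
have [Es_mul Es_rk1] := Es_mo.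
have /fin_all_exists[k colk_neq0] j : exists k, col k (Es j) != 0.
  apply/existsP; have : Es j != 0 by rewrite -mxrank_eq0 Es_rk1.
  apply: contraNT => /existsPn col0; apply/eqP/matrixP => a b.
  by have /negPn/eqP/colP/(_ a) := col0 b; rewrite !mxE.
apply: (biorth_sum1 colk_neq0) => i j.
by rewrite colE mulmxA Es_mul; case: eqP => [->|_]; rewrite ?colE ?mul0mx.
Qed.

Lemma orthogonal_idempotents_mul_comb (c : 'I_n -> F) j :
  (\sum_i c i *: Es i) *m Es j = c j *: Es j.
Proof.
rewrite mulmx_suml (bigD1 j) //= -scalemxAl Es_mo.1 eqxx big1 ?addr0 // => i /negbTE ij.
by rewrite -scalemxAl Es_mo.1 ij scaler0.
Qed.

Lemma bipartite_diag A i : bipartite Es A -> Es i *m A *m Es i = 0.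
Proof. by move=> A_bip; rewrite mxrank1_sandwich ?Es_mo.2 // A_bip scale0r. Qed.

End OrthogonalIdempotents.

Section PrimitiveIdempotents.
Variables (F : fieldType) (n : nat) (A : 'M[F]_n) (theta : 'I_n -> F)
  (E : 'I_n -> 'M[F]_n) (w : 'I_n -> 'cV[F]_n).
Hypotheses (w_neq0 : forall j, w j != 0) (A_w : forall j, A *m w j = theta j *: w j)
  (E_prim : forall i, primitive_idempotent A theta i (E i)).

Lemma primitive_idempotent_eigvec i j : E i *m w j = if i == j then w j else 0.
Proof.
have := @E_prim i (fun k => if k == j then w j else 0).
rewrite (bigD1 j) //= eqxx big1 ?addr0 => [| k /negbTE -> //].
by apply=> k; case: eqP => [->|_]; rewrite ?A_w // mulmx0 scaler0.
Qed.

Lemma primitive_idempotent_A i : E i *m A = theta i *: E i.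
Proof.
apply: (biorth_mx_eq w_neq0 primitive_idempotent_eigvec) => j.
rewrite -mulmxA A_w -scalemxAl -!scalemxAr primitive_idempotent_eigvec.
by case: eqP => [->|_]; rewrite ?scaler0.
Qed.

Lemma primitive_idempotent_sum1 : \sum_i E i = 1%:M.
Proof. exact: biorth_sum1 w_neq0 primitive_idempotent_eigvec. Qed.

Lemma primitive_idempotent_rank1 i : \rank (E i) = 1%N.
Proof. exact: biorth_rank1 w_neq0 primitive_idempotent_eigvec i. Qed.

Lemma primitive_idempotent_inj : injective E.
Proof.
move=> i j Eij; have := primitive_idempotent_eigvec j i.
rewrite -Eij primitive_idempotent_eigvec eqxx; case: eqP => [-> // | _ /eqP].
by rewrite (negbTE (w_neq0 i)).
Qed.

End PrimitiveIdempotents.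

Definition irreducible_tridiagonal (F : fieldType) n (Es : 'I_n -> 'M[F]_n)
    (A : 'M[F]_n) : Prop :=
  (forall i j : 'I_n, ((i.+1 < j) || (j.+1 < i))%N -> Es i *m A *m Es j = 0) /\
  (forall i j : 'I_n, ((i.+1 == j) || (j.+1 == i))%N -> Es i *m A *m Es j != 0).

Lemma irreducible_tridiagonal_rev (F : fieldType) n (Es : 'I_n -> 'M[F]_n) A :
  irreducible_tridiagonal Es A -> irreducible_tridiagonal (fun i => Es (rev_ord i)) A.
Proof.
move=> [far adj]; split=> i j ij; [apply: far | apply: adj];
  by move: ij (ltn_ord i) (ltn_ord j) => /=; lia.
Qed.

Section Tridiagonal.
Variables (F : fieldType) (d : nat) (Es : 'I_d.+1 -> 'M[F]_d.+1) (A : 'M[F]_d.+1).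
Hypotheses (Es_mo : mutually_orthogonal_idempotents Es)
  (A_tri : irreducible_tridiagonal Es A).

Let Es_sum1 := orthogonal_idempotents_sum1 Es_mo.

Lemma Es0_left_eigen_eq0 m (X : 'M[F]_(m, d.+1)) c :
  X *m A = c *: X -> X *m Es ord0 = 0 -> X = 0.
Proof.
move=> XA XEs0.
have XEs k (i : 'I_d.+1) : i = k :> nat -> X *m Es i = 0.
  elim/ltn_ind: k i => -[|k] IHk i ik; first by rewrite (_ : i = ord0) //; apply: val_inj.
  have k_lt : (k < d.+1)%N by rewrite (leq_trans _ (ltn_ord i)) // ik.
  pose j : 'I_d.+1 := inord k; have jk : j = k :> nat by rewrite inordK.
  have XAEsj : X *m A *m Es j = 0 by rewrite XA -scalemxAl (IHk k) ?scaler0.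
  have : X *m Es i *m A *m Es j = 0.
    rewrite -XAEsj -[in RHS](mulmx1 X) -Es_sum1 mulmx_sumr !mulmx_suml.
    rewrite (bigD1 i) //= big1 ?addr0 // => l li.
    have [lk | kl] := leqP l k; first by rewrite (IHk l lk l) ?mul0mx.
    rewrite -!mulmxA (mulmxA (Es l)) A_tri.1 ?mulmx0 //; apply/orP; right.
    have : (l : nat) != k.+1 by rewrite -ik (inj_eq val_inj).
    by rewrite jk; lia.
  rewrite -mulmxA; apply: mxrank1_mulmx_cancel (Es_mo.2 i) _.
  by rewrite mulmxA A_tri.2 // ik jk eqxx orbT.
by rewrite -[X]mulmx1 -Es_sum1 mulmx_sumr big1 // => i _; apply: XEs.
Qed.

Lemma bipartite_A_Es0 : bipartite Es A -> A *m Es ord0 = Es (inord 1) *m A *m Es ord0.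
Proof.
move=> A_bip; rewrite -[A *m _]mul1mx -Es_sum1 mulmx_suml (bigD1 (inord 1)) //=.
rewrite big1 ?addr0 ?mulmxA // => i i_neq1; rewrite mulmxA.
have [-> | i_neq0] := eqVneq i ord0; first exact: bipartite_diag.
apply: A_tri.1; apply/orP; right.
have : (i : nat) != 0%N by apply: contraNneq i_neq0 => i0; apply/eqP/val_inj.
have : (i : nat) != 1%N.
  apply: contraNneq i_neq1 => i1; apply/eqP/val_inj; rewrite /= i1 inordK // -i1.
  exact: ltn_ord.
by rewrite /=; lia.
Qed.

End Tridiagonal.

Lemma dual_coef_formula (F : fieldType) n (E0 E1 S0 S1 A As : 'M[F]_n)
    (t0 t1 s0 s1 a : F) :
  t1 != t0 -> E0 *m A = t0 *: E0 -> E1 *m A = t1 *: E1 ->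
  E0 *m As = a *: E0 + E0 *m As *m E1 ->
  As *m S0 = s0 *: S0 -> As *m S1 = s1 *: S1 ->
  A *m S0 = S1 *m A *m S0 -> E0 *m S0 != 0 ->
  a = (t1 * s0 - t0 * s1) / (t1 - t0).
Proof.
move=> t01 E0A E1A E0As AsS0 AsS1 AS0 Z_neq0; set Z := E0 *m S0 in Z_neq0.
have via_S1 : E0 *m As *m A *m S0 = (s1 * t0) *: Z.
  rewrite -mulmxA AS0 !mulmxA -(mulmxA E0) AsS1 -scalemxAr -!scalemxAl.
  have -> : E0 *m S1 *m A *m S0 = E0 *m (A *m S0) by rewrite AS0 !mulmxA.
  by rewrite mulmxA E0A -scalemxAl scalerA.
have via_E1 : E0 *m As *m A *m S0 = (a * t0 + t1 * (s0 - a)) *: Z.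
  have E0AsE1 : E0 *m As *m E1 = E0 *m As - a *: E0 by rewrite [in RHS]E0As addrC addKr.
  rewrite E0As !mulmxDl -!scalemxAl E0A -(mulmxA _ E1) E1A -scalemxAr -scalemxAl E0AsE1.
  rewrite -scalemxAl mulmxBl -mulmxA AsS0 -scalemxAr -scalemxAl -scalerBl.
  by rewrite !scalerA -scalerDl.
have coef_eq := scalerIl Z_neq0 (etrans (esym via_S1) via_E1).
apply: (canRL (mulfK _)); first by rewrite subr_eq0.
by rewrite (mulrC t0 s1) coef_eq; ring.
Qed.

Section LeadingDualCoefficient.
Variables (F : fieldType) (d : nat) (Es E : 'I_d.+1 -> 'M[F]_d.+1)
  (A Astar : 'M[F]_d.+1) (theta thetas : 'I_d.+1 -> F) (w : 'I_d.+1 -> 'cV[F]_d.+1).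
Hypotheses (d_gt0 : (0 < d)%N) (Es_mo : mutually_orthogonal_idempotents Es)
  (A_tri : irreducible_tridiagonal Es A) (A_bip : bipartite Es A)
  (Astar_Es : forall i, Astar *m Es i = thetas i *: Es i)
  (theta_inj : injective theta) (w_neq0 : forall j, w j != 0)
  (A_w : forall j, A *m w j = theta j *: w j)
  (E_prim : forall i, primitive_idempotent A theta i (E i))
  (E0_nadj : forall j, j != inord 1 -> ~ Delta_adj E Astar ord0 j).

Let i1_neq0 : inord 1 != ord0 :> 'I_d.+1.
Proof. by rewrite -val_eqE /= inordK. Qed.

Let E0_Astar_decomp :
  E ord0 *m Astar = \tr (E ord0 *m Astar) *: E ord0 + E ord0 *m Astar *m E (inord 1).
Proof.
rewrite -[LHS]mulmx1 -(primitive_idempotent_sum1 w_neq0 A_w E_prim) mulmx_sumr.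
rewrite (bigD1 ord0) //= (bigD1 (inord 1)) //= big1 ?addr0.
  by rewrite mxrank1_sandwich ?(primitive_idempotent_rank1 w_neq0 A_w E_prim).
move=> j /andP[j_neq0 j_neq1]; apply/eqP; apply: contraT => E0AsEj_neq0.
case: (E0_nadj j_neq1); split; last exact/eqP.
by move/(primitive_idempotent_inj w_neq0 A_w E_prim) => j0; rewrite j0 eqxx in j_neq0.
Qed.

Let E0_Es0_neq0 : E ord0 *m Es ord0 != 0.
Proof.
apply: contraTneq (w_neq0 ord0) => E0Es0.
have E0_0 := Es0_left_eigen_eq0 Es_mo A_tri
  (primitive_idempotent_A w_neq0 A_w E_prim ord0) E0Es0.
have := primitive_idempotent_eigvec A_w E_prim ord0 ord0.
by rewrite eqxx E0_0 mul0mx => <-; rewrite eqxx.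
Qed.

Lemma tr_E0_Astar :
  \tr (E ord0 *m Astar) = (theta (inord 1) * thetas ord0 - theta ord0 * thetas (inord 1))
                         / (theta (inord 1) - theta ord0).
Proof.
apply: (dual_coef_formula _ _ _ E0_Astar_decomp (Astar_Es _) (Astar_Es _) _ E0_Es0_neq0).
- by rewrite (inj_eq theta_inj).
- exact: primitive_idempotent_A.
- exact: primitive_idempotent_A.
- exact: bipartite_A_Es0.
Qed.

End LeadingDualCoefficient.

Theorem lemma7p4 (F : fieldType) (d : nat) (hd : (3 <= d)%N)
  (Es : 'I_d.+1 -> 'M[F]_d.+1) (A : 'M[F]_d.+1)
  (E : 'I_d.+1 -> 'M[F]_d.+1) (theta thetas : 'I_d.+1 -> F) :
  mutually_orthogonal_idempotents Es ->
  (forall i j : 'I_d.+1, ((i.+1 < j) || (j.+1 < i))%N -> Es i *m A *m Es j = 0) ->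
  (forall i j : 'I_d.+1, ((i.+1 == j) || (j.+1 == i))%N -> Es i *m A *m Es j != 0) ->
  multiplicity_free_with A theta ->
  bipartite Es A ->
  (forall i, primitive_idempotent A theta i (E i)) ->
  let Astar := \sum_i thetas i *: Es i in
  normalizing Es A (theta ord0) ->
  Delta_adj E Astar ord0 (inord 1) ->
  (forall j : 'I_d.+1, j != inord 1 -> ~ Delta_adj E Astar ord0 j) ->
  let a0 := \tr (E ord0 *m Astar) in
  a0 = (theta (inord 1) * thetas ord0 - theta ord0 * thetas (inord 1))
         / (theta (inord 1) - theta ord0) /\
  a0 = (theta (inord 1) * thetas ord_max - theta ord0 * thetas (inord d.-1))
         / (theta (inord 1) - theta ord0).
Proof.
move=> Es_mo far adj [theta_inj /fin_all_exists2[w w_neq0 A_w]] A_bip E_prim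
  Astar _ _ E0_nadj a0.
have d_gt0 : (0 < d)%N by apply: leq_trans hd.
have A_tri : irreducible_tridiagonal Es A by split.
have Astar_Es j : Astar *m Es j = thetas j *: Es j.
  exact: (orthogonal_idempotents_mul_comb Es_mo).
split; first exact: tr_E0_Astar A_tri A_bip Astar_Es theta_inj w_neq0 A_w E_prim E0_nadj.
have rEs_mo : mutually_orthogonal_idempotents (fun i => Es (rev_ord i)).
  by split=> [i j|i]; rewrite ?Es_mo.1 ?(inj_eq rev_ord_inj) ?Es_mo.2.
rewrite /a0 (tr_E0_Astar d_gt0 rEs_mo (irreducible_tridiagonal_rev A_tri) _
  (fun i => Astar_Es (rev_ord i)) theta_inj w_neq0 A_w E_prim E0_nadj) //.
have -> : rev_ord ord0 = ord_max :> 'I_d.+1 by apply/val_inj; rewrite /= subn1.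
have -> // : rev_ord (inord 1) = inord d.-1 :> 'I_d.+1.
by apply/val_inj; rewrite /= !inordK //; lia.
Qed.
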